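(* Consider the multi-block primal semidefinite program $\min_{\mathbf{X}\in\mathbb{X}}\{f(\mathbf{X}):=\langle\mathbf{C},\mathbf{X}\rangle \mid \mathcal{A}(\mathbf{X})=\mathbf{b},\ \mathbf{X}\in\mathcal{K}\}$ with optimal value $f^\star$, and suppose it satisfies Slater's condition. Let $\{(\mathbf{X}^k,\mathbf{y}^k,\mathbf{S}^k)\}$ be generated by the STRIDE algorithm described in the context. Then $\{f(\mathbf{X}^k)\}$ converges to $f^\star$.
   Context: $\mathbb{X}=\mathbb{S}^{n_1}\times\cdots\times\mathbb{S}^{n_l}$ (tuples of real symmetric matrices), $\langle\mathbf{C},\mathbf{X}\rangle=\sum_i\langle\mathbf{C}_i,\mathbf{X}_i\rangle$ (trace inner product), $\mathcal{A}:\mathbb{X}\to\mathbb{R}^m$ linear, $\mathcal{K}=\mathbb{S}^{n_1}_+\times\cdots\times\mathbb{S}^{n_l}_+$, and $\mathcal{F}_P=\{\mathbf{X}\in\mathbb{X}\mid\mathcal{A}(\mathbf{X})=\mathbf{b},\ \mathbf{X}\in\mathcal{K}\}$. STRIDE: given an initial point $(\mathbf{X}^0,\mathbf{S}^0,\mathbf{y}^0)\in\mathcal{K}\times\mathcal{K}\times\mathbb{R}^m$, a constant $\epsilon>0$, and a nondecreasing sequence $\sigma_k>0$, for $k=0,1,\dots$: (1) short projected-gradient step: $\overline{\mathbf{X}}^{k+1}=\Pi_{\mathcal{F}_P}(\mathbf{X}^k-\sigma_k\mathbf{C})$, where $\Pi_{\mathcal{F}_P}$ is the Euclidean projection onto $\mathcal{F}_P$,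 also producing dual iterates $(\mathbf{S}^{k+1},\mathbf{y}^{k+1})$ of the projection problem; (2) long step: compute a candidate $\widehat{\mathbf{X}}^{k+1}\in\mathbb{X}$ (in the paper, by rounding leading eigenvectors of $\overline{\mathbf{X}}^{k+1}$ to feasible points of an underlying polynomial problem, running local nonlinear-programming search, and lifting the best local solution to a rank-one moment matrix with its localizing matrices); (3) update: $\mathbf{X}^{k+1}=\widehat{\mathbf{X}}^{k+1}$ if $f(\widehat{\mathbf{X}}^{k+1})\le f(\overline{\mathbf{X}}^{k+1})-\epsilon$ and $\widehat{\mathbf{X}}^{k+1}\in\mathcal{F}_P$, otherwise $\mathbf{X}^{k+1}=\overline{\mathbf{X}}^{k+1}$. (The iteration is stopped when KKT residuals fall below a tolerance; convergence refers to the sequence generated.) *)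

From HB Require Import structures.
From mathcomp Require Import all_boot all_order all_algebra.
From mathcomp Require Import all_classical all_reals all_analysis.
Set Implicit Arguments. Unset Strict Implicit. Unset Printing Implicit Defensive.
Import Order.TTheory GRing.Theory Num.Theory.
Local Open Scope ring_scope.

Section Defs.
Variable R : realType.
Variable l : nat.
Variable ns : 'I_l -> nat.

(* An element of X = S^{n_1} x ... x S^{n_l} (as a tuple of square matrices;
   symmetry is imposed separately by [bsym]). *)
Definition bmat := forall i : 'I_l, 'M[R]_(ns i).

Definition bsub (X Y : bmat) : bmat := fun i => X i - Y i.
Definition bscale (a : R) (X : bmat) : bmat := fun i => a *: X i.

Definition binner (X Y : bmat) : R := \sum_(i < l) \tr ((X i)^T *m Y i).

Definition symmx n (M : 'M[R]_n) : Prop := M^T = M.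
Definition bsym (X : bmat) : Prop := forall i, symmx (X i).

Definition psdmx n (M : 'M[R]_n) : Prop :=
  symmx M /\ forall v : 'cV[R]_n, 0 <= (v^T *m M *m v) 0 0.
Definition pdmx n (M : 'M[R]_n) : Prop :=
  symmx M /\ forall v : 'cV[R]_n, v != 0 -> 0 < (v^T *m M *m v) 0 0.

Definition inK (X : bmat) : Prop := forall i, psdmx (X i).
Definition inintK (X : bmat) : Prop := forall i, pdmx (X i).

Definition Aop m (A : 'I_m -> bmat) (X : bmat) : 'I_m -> R :=
  fun j => binner (A j) X.

Definition feasP m (A : 'I_m -> bmat) (b : 'I_m -> R) (X : bmat) : Prop :=
  (forall j, Aop A X j = b j) /\ inK X.

Definition is_proj (F : bmat -> Prop) (V P : bmat) : Prop :=
  F P /\ forall Z, F Z -> binner (bsub P V) (bsub P V) <= binner (bsub Z V) (bsub Z V).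

Definition is_optval (F : bmat -> Prop) (f : bmat -> R) (fstar : R) : Prop :=
  (forall X, F X -> fstar <= f X) /\
  (forall e : R, 0 < e -> exists X, F X /\ f X < fstar + e).

Definition slater m (A : 'I_m -> bmat) (b : 'I_m -> R) : Prop :=
  exists X0, (forall j, Aop A X0 j = b j) /\ inintK X0.

End Defs.

(** A projected-gradient step from [X] with step [s] satisfies, for every feasible
    [Z], the three-point inequality
    [2 s (f(P) - f(Z)) <= |X - Z|^2 - |P - Z|^2 - |P - X|^2],
    a consequence of the variational inequality characterising projections onto
    the convex set [F_P].  Taking [Z = X^k] shows that the objective values are
    nonincreasing from [k = 1] on; being bounded below by [f*], they converge, so
    only finitely many accepted long steps (each gaining at least [eps]) occur.
    Afterwards the method is plain projected gradient: if the limit [L] exceeded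
    [f(Z)] for some feasible [Z], the three-point inequality would decrease
    [|X^k - Z|^2] by at least [2 sigma_0 (L - f(Z)) > 0] at every step, which is
    impossible.  Hence [L <= f*]. *)

From HB Require Import structures.
From mathcomp Require Import all_boot all_order all_algebra.
From mathcomp Require Import all_classical all_reals all_analysis.
From mathcomp Require Import ring lra.
Set Implicit Arguments. Unset Strict Implicit. Unset Printing Implicit Defensive.
Import Order.TTheory GRing.Theory Num.Theory.
Import numFieldNormedType.Exports.
Local Open Scope classical_set_scope.
Local Open Scope ring_scope.

Section BlockInnerProduct.
Variables (R : realType) (l : nat) (ns : 'I_l -> nat).
Implicit Types (X Y W : bmat R ns) (a : R).

Definition badd X Y : bmat R ns := fun i => X i + Y i.

Lemma binnerDl X Y W : binner (badd X Y) W = binner X W + binner Y W.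
Proof.
rewrite /binner -big_split; apply: eq_bigr => i _ /=.
by rewrite /badd linearD /= mulmxDl mxtraceD.
Qed.

Lemma binnerBl X Y W : binner (bsub X Y) W = binner X W - binner Y W.
Proof.
rewrite /binner -sumrB; apply: eq_bigr => i _ /=.
by rewrite /bsub linearB /= mulmxBl linearB.
Qed.

Lemma binnerZl a X W : binner (bscale a X) W = a * binner X W.
Proof.
rewrite /binner mulr_sumr; apply: eq_bigr => i _ /=.
by rewrite /bscale linearZ /= -scalemxAl mxtraceZ.
Qed.

Lemma binnerC X Y : binner X Y = binner Y X.
Proof.
by apply: eq_bigr => i _; rewrite -mxtrace_tr trmx_mul trmxK.
Qed.

Lemma binnerDr X Y W : binner W (badd X Y) = binner W X + binner W Y.
Proof. by rewrite binnerC binnerDl !(binnerC W). Qed.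

Lemma binnerBr X Y W : binner W (bsub X Y) = binner W X - binner W Y.
Proof. by rewrite binnerC binnerBl !(binnerC W). Qed.

Lemma binnerZr a X W : binner W (bscale a X) = a * binner W X.
Proof. by rewrite binnerC binnerZl (binnerC W). Qed.

Lemma binner_ge0 X : 0 <= binner X X.
Proof.
apply: sumr_ge0 => i _; apply: sumr_ge0 => j _.
rewrite mxE; apply: sumr_ge0 => k _; rewrite mxE -expr2; exact: sqr_ge0.
Qed.

End BlockInnerProduct.

Lemma quad_ge0_near0_linear_ge0 (R : realFieldType) (a c : R) : 0 <= c ->
  (forall t, 0 < t -> t <= 1 -> 0 <= 2 * t * a + t ^+ 2 * c) -> 0 <= a.
Proof.
move=> c_ge0 quad_ge0; rewrite leNgt; apply/negP => a_lt0.
have ca_gt0 : 0 < c - a by lra.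
pose t := - a / (c - a).
have t_gt0 : 0 < t by rewrite /t divr_gt0 // oppr_gt0.
have t_le1 : t <= 1 by rewrite /t ler_pdivrMr // mul1r; lra.
have := quad_ge0 t t_gt0 t_le1.
have -> : 2 * t * a + t ^+ 2 * c = t * ((a * (c - 2 * a)) / (c - a)).
  by rewrite /t; field; lra.
by rewrite pmulr_rge0 // ler_pdivlMr // mul0r; nra.
Qed.

Section FeasibleProjection.
Variables (R : realType) (l : nat) (ns : 'I_l -> nat) (m : nat).
Variables (A : 'I_m -> bmat R ns) (b : 'I_m -> R).
Implicit Types (C P V X Z : bmat R ns).

Lemma feasP_segment P Z t : feasP A b P -> feasP A b Z -> 0 <= t -> t <= 1 ->
  feasP A b (badd P (bscale t (bsub Z P))).
Proof.
move=> [AP KP] [AZ KZ] t_ge0 t_le1; split.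
  move=> j; rewrite /Aop binnerDr binnerZr binnerBr.
  by move: (AP j) (AZ j); rewrite /Aop => -> ->; rewrite subrr mulr0 addr0.
move=> i; have [symP psdP] := KP i; have [symZ psdZ] := KZ i; split.
  rewrite /symmx /badd /bscale /bsub in symP symZ *.
  by rewrite linearD linearZ linearB /= symP symZ.
move=> v; rewrite /badd /bscale /bsub mulmxDr mulmxDl -scalemxAr -scalemxAl.
rewrite mulmxBr mulmxBl.
have := psdP v; have := psdZ v.
move: (v^T *m P i *m v) (v^T *m Z i *m v) => vPv vZv.
by rewrite !mxE; nra.
Qed.

Lemma proj_variational_ineq V P Z :
  is_proj (feasP A b) V P -> feasP A b Z -> 0 <= binner (bsub P V) (bsub Z P).
Proof.
move=> [FP P_min] FZ.
apply: (quad_ge0_near0_linear_ge0 (binner_ge0 (bsub Z P))) => t t_gt0 t_le1.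
have := P_min _ (feasP_segment FP FZ (ltW t_gt0) t_le1).
have -> : bsub (badd P (bscale t (bsub Z P))) V
          = badd (bsub P V) (bscale t (bsub Z P)).
  by apply: functional_extensionality_dep => i; rewrite /bsub /badd addrAC.
move: (bsub P V) (bsub Z P) => U W.
rewrite !binnerDl !binnerDr !binnerZl !binnerZr (binnerC W U) expr2; lra.
Qed.

Lemma proj_grad_three_point C X P Z s :
  is_proj (feasP A b) (bsub X (bscale s C)) P -> feasP A b Z ->
  2 * s * (binner C P - binner C Z) <=
  binner (bsub X Z) (bsub X Z) - binner (bsub P Z) (bsub P Z)
  - binner (bsub P X) (bsub P X).
Proof.
move=> P_proj FZ; have := proj_variational_ineq P_proj FZ.
rewrite !(binnerBl, binnerBr, binnerZl, binnerZr).
rewrite (binnerC Z P) (binnerC Z X) (binnerC X P); lra.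
Qed.

End FeasibleProjection.

Section RealSequences.
Variable R : realType.
Implicit Types (u D : R ^nat) (c e : R).

Lemma ge0_seq_no_uniform_decrease D c K : (forall k, 0 <= D k) -> 0 < c ->
  ~ (forall k, (K <= k)%N -> D k.+1 <= D k - c).
Proof.
move=> D_ge0 c_gt0 D_decr.
have D_drop n : D (K + n)%N <= D K - n%:R * c.
  elim: n => [|n IHn]; first by rewrite addn0 mul0r subr0.
  by rewrite addnS mulrSr; have := D_decr _ (leq_addr n K); lra.
have DKc_ge0 : 0 <= D K / c by rewrite divr_ge0 // ltW.
have := archi_boundP DKc_ge0; rewrite ltr_pdivrMr // => DK_lt.
have := D_drop (Num.bound (D K / c)); have := D_ge0 (K + Num.bound (D K / c))%N.
lra.
Qed.

Lemma nonincreasing_cvgn_steps_lt u e : nonincreasing_seq u -> cvgn u -> 0 < e ->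
  \forall k \near \oo, u k - e < u k.+1.
Proof.
move=> u_ni u_cvg e_gt0; move/cvgrPdist_lt: (u_cvg) => /(_ e e_gt0).
apply: filterS => k; rewrite ltr_distlC => /andP[_ uk_lt].
have := nonincreasing_cvgn_ge u_ni u_cvg k.+1; lra.
Qed.

End RealSequences.

Section Stride.
Variables (R : realType) (l : nat) (ns : 'I_l -> nat) (m : nat).
Variables (C : bmat R ns) (A : 'I_m -> bmat R ns) (b : 'I_m -> R) (fstar eps : R).
Variables (sigma : nat -> R) (X Xbar Xhat : nat -> bmat R ns).

Local Notation f := (binner C).
Local Notation FP := (feasP A b).

Hypothesis fstar_optval : is_optval FP f fstar.
Hypothesis eps_gt0 : 0 < eps.
Hypothesis sigma_gt0 : forall k, 0 < sigma k.
Hypothesis sigma_nondecr : forall k, sigma k <= sigma k.+1.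
Hypothesis Xbar_proj :
  forall k, is_proj FP (bsub (X k) (bscale (sigma k) C)) (Xbar k.+1).
Hypothesis X_update : forall k,
      (f (Xhat k.+1) <= f (Xbar k.+1) - eps /\ FP (Xhat k.+1) /\ X k.+1 = Xhat k.+1)
   \/ (~ (f (Xhat k.+1) <= f (Xbar k.+1) - eps /\ FP (Xhat k.+1)) /\ X k.+1 = Xbar k.+1).

Lemma stride_feasible k : FP (X k.+1).
Proof. by case: (X_update k) => [[_ [? ->]] | [_ ->]] //; exact: (Xbar_proj k).1. Qed.

Lemma stride_short_step_le k : f (Xbar k.+2) <= f (X k.+1).
Proof.
have := proj_grad_three_point (Xbar_proj k.+1) (stride_feasible k).
rewrite binnerBl subrr => three_point.
have step_ge0 := binner_ge0 (bsub (Xbar k.+2) (X k.+1)).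
have : 2 * sigma k.+1 * (f (Xbar k.+2) - f (X k.+1)) <= 0 by lra.
by rewrite pmulr_rle0 ?subr_le0 // mulr_gt0.
Qed.

Lemma stride_nonincreasing : nonincreasing_seq (fun k => f (X k.+1)).
Proof.
apply/nonincreasing_seqP => k; suff : f (X k.+2) <= f (X k.+1) by [].
have := stride_short_step_le k; have := eps_gt0.
by case: (X_update k.+1) => [[long [_ ->]] | [_ ->]] //; lra.
Qed.

Lemma stride_cvgn : cvgn (fun k => f (X k.+1)).
Proof.
apply: nonincreasing_is_cvgn; first exact: stride_nonincreasing.
by exists fstar => _ [k _ <-]; apply: fstar_optval.1; exact: stride_feasible.
Qed.

Lemma stride_eventually_short : \forall k \near \oo, X k.+2 = Xbar k.+2.
Proof.
have := nonincreasing_cvgn_steps_lt stride_nonincreasing stride_cvgn eps_gt0.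
apply: filterS => k /= step_lt.
case: (X_update k.+1) => [[long [_ Xk]] | [_ //]].
by exfalso; move: step_lt; rewrite Xk; have := stride_short_step_le k; lra.
Qed.

Lemma stride_lim_le_feasible Z : FP Z -> limn (fun k => f (X k.+1)) <= f Z.
Proof.
move=> FZ; set L := limn _; rewrite leNgt; apply/negP => fZ_lt_L.
have [K _ short] := stride_eventually_short.
have L_le k : L <= f (X k.+1).
  exact: nonincreasing_cvgn_ge stride_nonincreasing stride_cvgn k.
have sigma0_le k : sigma 0 <= sigma k.
  by elim: k => // k IHk; exact: le_trans IHk (sigma_nondecr k).
apply: (@ge0_seq_no_uniform_decrease _
          (fun k => binner (bsub (X k.+1) Z) (bsub (X k.+1) Z))
          (2 * sigma 0 * (L - f Z)) K).
- by move=> k; exact: binner_ge0.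
- by rewrite !mulr_gt0 // subr_gt0.
move=> k Kk /=; have := proj_grad_three_point (Xbar_proj k.+1) FZ.
rewrite -short //; have := binner_ge0 (bsub (X k.+2) (X k.+1)).
have : sigma 0 * (L - f Z) <= sigma k.+1 * (f (X k.+2) - f Z).
  by apply: ler_pM; [exact: ltW | lra | exact: sigma0_le | have := L_le k.+1; lra].
lra.
Qed.

Lemma stride_cvg_optval : (fun k => f (X k)) @ \oo --> fstar.
Proof.
rewrite -cvg_shiftS /=; suff <- : limn (fun k => f (X k.+1)) = fstar.
  exact: stride_cvgn.
apply/eqP; rewrite eq_le; apply/andP; split.
  apply/ler_addgt0Pr => e e_gt0; have [Z [FZ fZ_lt]] := fstar_optval.2 e e_gt0.
  exact: le_trans (stride_lim_le_feasible FZ) (ltW fZ_lt).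
apply: limr_ge; first exact: stride_cvgn.
by near=> k; apply: fstar_optval.1; exact: stride_feasible.
Unshelve. all: by end_near.
Qed.

End Stride.

Theorem theorem3 (R : realType) (l : nat) (ns : 'I_l -> nat) (m : nat)
  (C : bmat R ns) (A : 'I_m -> bmat R ns) (b : 'I_m -> R) (fstar : R)
  (eps : R) (sigma : nat -> R)
  (X Xbar Xhat : nat -> bmat R ns) :
  bsym C -> (forall j, bsym (A j)) ->
  let f := binner C in
  let FP := feasP A b in
  is_optval FP f fstar ->
  slater A b ->
  0 < eps ->
  (forall k, 0 < sigma k) ->
  (forall k, sigma k <= sigma k.+1) ->
  (forall k, bsym (Xhat k)) ->
  inK (X 0%N) ->
  (forall k, is_proj FP (bsub (X k) (bscale (sigma k) C)) (Xbar k.+1)) ->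
  (forall k,
      (f (Xhat k.+1) <= f (Xbar k.+1) - eps /\ FP (Xhat k.+1) /\ X k.+1 = Xhat k.+1)
   \/ (~ (f (Xhat k.+1) <= f (Xbar k.+1) - eps /\ FP (Xhat k.+1)) /\ X k.+1 = Xbar k.+1)) ->
  (fun k => f (X k)) @ \oo --> fstar.
Proof.
move=> _ _ f FP optval _ eps_gt0 sigma_gt0 sigma_nondecr _ _ Xbar_proj X_update.
exact: (stride_cvg_optval optval eps_gt0 sigma_gt0 sigma_nondecr Xbar_proj X_update).
Qed.
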